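(* Let $G$ be a topological category and $X$ a topological space with a continuous partial category action by $G$. Suppose $G$ is star open and the action is graph open. Let $Y$ and $i : X\to Y$ be as defined below. Then $i$ is an open map.
   Context: Conventions: $G$ is a small category; objects are identified with their identity morphisms, so ${\rm ob}(G)\subseteq{\rm mor}(G)$; $d(g), c(g)$ are domain and codomain, $G^2=\{(g,h)\mid d(g)=c(h)\}$. $G$ is a topological category if ${\rm mor}(G)$ is a topological space and composition $G^2\to{\rm mor}(G)$ is continuous (with $G^2$ carrying the relative product topology). A partial category action by $G$ on $X$ is a partial function ${\rm mor}(G)\times X\to X$, $(g,x)\mapsto g\cdot x$ where defined, such that: (C1) for every $x$ there is $e\in{\rm ob}(G)$ with $e\cdot x$ defined, and whenever $f\in{\rm ob}(G)$ and $f\cdot x$ is defined, $f\cdot x=x$; (C2) if $g\cdot x$ is defined then $d(g)\cdot x$ is defined; (C3) if $(g,h)\in G^2$ and $h\cdot x$ is defined, then $(gh)\cdot x$ is defined iff $g\cdot(h\cdot x)$ is defined, and then they are equal. It is a continuous partial category action if moreover (CA1) $X_e=\{x\mid e\cdot x\text{ defined}\}$ is open in $X$ for every $e\in{\rm ob}(G)$, and (CA2) the map $(g,x)\mapsto g\cdot x$ is continuous on its domain with the relative product topology. $G$ is star open if $d^{-1}(e) = \{g\in{\rm mor}(G)\mid d(g)=e\}$ is open in ${\rm mor}(G)$ for every $e\in{\rm ob}(G)$. The action is graph open if $\Gamma=\{(g,x)\in{\rm mor}(G)\times X\mid g\cdot x\text{ defined}\}$ is open in ${\rm mor}(G)\times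 X$. Construction: $\overline{X}=\{(g,x)\in{\rm mor}(G)\times X\mid d(g)\cdot x\text{ defined}\}$ with the relative product topology; $(g,x)\sim(g',x')$ if either (i) there is $h\in{\rm mor}(G)$ with $(g',h)\in G^2$, $h\cdot x$ defined, $g=g'h$ and $x'=h\cdot x$, or (ii) $x=x'$, $g,g'\in{\rm ob}(G)$ and both $g\cdot x$, $g'\cdot x'$ defined; $\simeq$ is the equivalence relation generated by $\sim$; $Y=\overline{X}/\simeq$ with the quotient topology, and $[g,x]$ is the class of $(g,x)$; $i : X\to Y$ is $i(x) = [e,x]$ for any $e\in{\rm ob}(G)$ with $e\cdot x$ defined (this is independent of the choice of $e$). *)

From HB Require Import structures.
From mathcomp Require Import all_boot all_order all_algebra.
From mathcomp Require Import all_classical topology.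
From Stdlib Require Import Relations.
Set Implicit Arguments. Unset Strict Implicit. Unset Printing Implicit Defensive.
Local Open Scope classical_set_scope.

(* A small category given by its morphisms M; objects are identified with their
   identity morphisms (ob : set M), d/c = domain/codomain, comp g h = g h,
   defined (meaningfully) when d g = c h. *)
Record is_category {M : Type} (ob : set M) (d c : M -> M) (comp : M -> M -> M)
  : Prop := {
  cat_ob_dc : forall e, ob e -> d e = e /\ c e = e;
  cat_d_ob : forall g, ob (d g);
  cat_c_ob : forall g, ob (c g);
  cat_comp_dc : forall g h, d g = c h -> d (comp g h) = d h /\ c (comp g h) = c g;
  cat_id_r : forall g, comp g (d g) = g;
  cat_id_l : forall g, comp (c g) g = g;
  cat_assoc : forall g h k, d g = c h -> d h = c k ->
      comp (comp g h) k = comp g (comp h k)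
}.

Definition G2 {M : Type} (d c : M -> M) : set (M * M) :=
  [set p | d p.1 = c p.2].

Definition topological_category {M : topologicalType} (ob : set M) (d c : M -> M)
  (comp : M -> M -> M) : Prop :=
  is_category ob d c comp /\ {within G2 d c, continuous (fun p => comp p.1 p.2)}.

(* Partial action: act g x = Some (g . x) when defined, None otherwise. *)
Definition adefined {M X : Type} (act : M -> X -> option X) (g : M) (x : X) :=
  act g x <> None.

Record partial_category_action {M X : Type} (ob : set M) (d c : M -> M)
  (comp : M -> M -> M) (act : M -> X -> option X) : Prop := {
  C1a : forall x, exists e, ob e /\ adefined act e x;
  C1b : forall f x y, ob f -> act f x = Some y -> y = x;
  C2 : forall g x, adefined act g x -> adefined act (d g) x;
  C3 : forall g h x y, d g = c h -> act h x = Some y ->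
         act (comp g h) x = act g y  (* defined iff defined, and then equal *)
}.

Definition Gamma {M X : Type} (act : M -> X -> option X) : set (M * X) :=
  [set p | adefined act p.1 p.2].

Definition continuous_partial_category_action {M X : topologicalType}
  (ob : set M) (d c : M -> M) (comp : M -> M -> M) (act : M -> X -> option X)
  : Prop :=
  [/\ partial_category_action ob d c comp act,
      forall e, ob e -> open [set x | adefined act e x] &
      (* CA2: (g,x) |-> g.x continuous on its domain Gamma (relative topology);
         the default value p.2 outside Gamma is irrelevant for within-continuity *)
      {within Gamma act, continuous (fun p => odflt p.2 (act p.1 p.2))}].

Definition star_open {M : topologicalType} (ob : set M) (d : M -> M) : Prop :=
  forall e, ob e -> open [set g | d g = e].

Definition graph_open {M X : topologicalType} (act : M -> X -> option X) : Prop :=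
  open (Gamma act).

Definition rel_open {T : topologicalType} (A S : set T) : Prop :=
  exists2 W, open W & S = W `&` A.

Definition Xbar {M X : Type} (d : M -> M) (act : M -> X -> option X)
  : set (M * X) := [set p | adefined act (d p.1) p.2].

Definition sim {M X : Type} (ob : set M) (d c : M -> M) (comp : M -> M -> M)
  (act : M -> X -> option X) (p q : M * X) : Prop :=
  (exists h, d q.1 = c h /\ act h p.2 = Some q.2 /\ p.1 = comp q.1 h)
  \/ (p.2 = q.2 /\ ob p.1 /\ ob q.1 /\ adefined act p.1 p.2 /\ adefined act q.1 q.2).

Definition simeq {M X : Type} (ob : set M) (d c : M -> M) (comp : M -> M -> M)
  (act : M -> X -> option X) (p q : M * X) : Prop :=
  Xbar d act p /\ Xbar d act q /\
  clos_refl_sym_trans (M * X)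
    (fun a b => Xbar d act a /\ Xbar d act b /\ sim ob d c comp act a b) p q.

(* Points of Y are equivalence classes; [g,x] is the class of (g,x). *)
Definition Ytype (M X : Type) := set (M * X).

Definition cls {M X : Type} (ob : set M) (d c : M -> M) (comp : M -> M -> M)
  (act : M -> X -> option X) (p : M * X) : Ytype M X :=
  [set q | simeq ob d c comp act p q].

(* Quotient topology on Y: V is open iff its preimage under the quotient map
   Xbar -> Y is open in Xbar (with the relative product topology). *)
Definition Y_open {M X : topologicalType} (ob : set M) (d c : M -> M)
  (comp : M -> M -> M) (act : M -> X -> option X) (V : set (Ytype M X)) : Prop :=
  rel_open (Xbar d act) [set p | Xbar d act p /\ V (cls ob d c comp act p)].

(* i(x) = [e,x] for any object e with e.x defined (independent of e);
   image of U under i. *)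
Definition i_image {M X : Type} (ob : set M) (d c : M -> M) (comp : M -> M -> M)
  (act : M -> X -> option X) (U : set X) : set (Ytype M X) :=
  [set y | exists u e, U u /\ ob e /\ adefined act e u /\
                       y = cls ob d c comp act (e, u)].

Definition i_open_map {M X : topologicalType} (ob : set M) (d c : M -> M)
  (comp : M -> M -> M) (act : M -> X -> option X) : Prop :=
  forall U : set X, open U -> Y_open ob d c comp act (i_image ob d c comp act U).

From mathcomp Require Import all_boot all_order all_algebra.
From mathcomp Require Import all_classical topology.
From Stdlib Require Import Relations.
Set Implicit Arguments. Unset Strict Implicit. Unset Printing Implicit Defensive.
Local Open Scope classical_set_scope.

(* The value [g . x] (defined or not) is an invariant of [simeq], and every
   [(g, x)] with [g . x] defined is equivalent to [(c g, g . x)].  Hence a class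
   [[g, x]] lies in [i(U)] iff [g . x] is defined and lies in [U], so the
   preimage of [i(U)] in [Xbar] is [Gamma ∩ a^-1(U) ∩ Xbar], which is open
   because [Gamma] is open and the action is continuous on [Gamma]. *)

Section Quotient.

Variables (M X : Type) (ob : set M) (d c : M -> M) (comp : M -> M -> M).
Variable act : M -> X -> option X.

Local Notation simeq := (simeq ob d c comp act).
Local Notation cls := (cls ob d c comp act).

Lemma simeq_refl p : Xbar d act p -> simeq p p.
Proof. by move=> Xp; do 2!split => //; apply: rst_refl. Qed.

Lemma simeq_sym p q : simeq p q -> simeq q p.
Proof. by move=> [Xp [Xq pq]]; do 2!split => //; apply: rst_sym. Qed.

Lemma simeq_trans p q r : simeq p q -> simeq q r -> simeq p r.
Proof. by move=> [Xp [_ pq]] [_ [Xr qr]]; do 2!split => //; apply: rst_trans qr. Qed.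

Lemma cls_eq p q : simeq p q -> cls p = cls q.
Proof.
move=> pq; apply/seteqP; split => r /=; first exact/simeq_trans/simeq_sym.
exact: simeq_trans.
Qed.

Hypothesis PA : partial_category_action ob d c comp act.

Lemma act_sim p q : sim ob d c comp act p q -> act p.1 p.2 = act q.1 q.2.
Proof.
case: p q => [g x] [g' x'] [[h [dch [hx ->]]] | /= [<- [obg [obg' [gx g'x]]]]].
  exact: (C3 PA dch hx).
case Eg: (act g x) gx => [y|] // _; case Eg': (act g' x) g'x => [y'|] // _.
by rewrite (C1b PA obg Eg) (C1b PA obg' Eg').
Qed.

Lemma act_simeq p q : simeq p q -> act p.1 p.2 = act q.1 q.2.
Proof.
move=> [_ [_]]; elim => {p q}.
- by move=> p q [_ [_ /act_sim]].
- by [].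
- by move=> ? ? _ ->.
- by move=> ? ? ? _ -> _ ->.
Qed.

Hypothesis CAT : is_category ob d c comp.

Lemma act_codomain g x u : act g x = Some u -> act (c g) u = Some u.
Proof.
move=> gx; have [dcg _] := cat_ob_dc CAT (cat_c_ob CAT g).
by rewrite -(C3 PA dcg gx) (cat_id_l CAT).
Qed.

Lemma simeq_codomain g x u : act g x = Some u -> simeq (g, x) (c g, u).
Proof.
move=> gx; have [dcg _] := cat_ob_dc CAT (cat_c_ob CAT g).
have Xgx : Xbar d act (g, x) by apply: (C2 PA); rewrite /adefined gx.
have Xcu : Xbar d act (c g, u) by rewrite /Xbar /adefined /= dcg (act_codomain gx).
do 2!split => //; apply: rst_step; do 2!split => //.
by left; exists g; rewrite (cat_id_l CAT).
Qed.

Lemma i_image_preimage (U : set X) :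
  [set p | Xbar d act p /\ i_image ob d c comp act U (cls p)] =
  Gamma act `&` (fun p => odflt p.2 (act p.1 p.2)) @^-1` U `&` Xbar d act.
Proof.
apply/seteqP; split => [[g x] /= [Xgx [u [e [Uu [obe [eu clsE]]]]]] |].
  have : cls (e, u) (g, x) by rewrite -clsE; exact: simeq_refl.
  move=> /act_simeq /=; case Eeu: (act e u) eu => [y|] // _ Egx.
  by rewrite /Gamma /adefined /= -Egx (C1b PA obe Eeu).
move=> [g x] /= [[Ggx Uu] Xgx]; split => //.
case Egx: (act g x) Ggx Uu => [u|] //= _ Uu.
exists u, (c g); do 3?split => //; first exact: cat_c_ob CAT g.
  by rewrite /adefined (act_codomain Egx).
exact/cls_eq/simeq_codomain.
Qed.

End Quotient.

Theorem proposition5p6 (M X : topologicalType) (ob : set M) (d c : M -> M)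
  (comp : M -> M -> M) (act : M -> X -> option X) :
  topological_category ob d c comp ->
  continuous_partial_category_action ob d c comp act ->
  star_open ob d ->
  graph_open act ->
  i_open_map ob d c comp act.
Proof.
move=> [CAT _] [PA _ cont_act] _ oGamma U oU.
exists (Gamma act `&` (fun p => odflt p.2 (act p.1 p.2)) @^-1` U).
  by move: cont_act; rewrite continuous_open_subspace // => /continuous_inP; apply.
exact: i_image_preimage.
Qed.
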